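(* Let $d\ge 1$, $t\ge 0$, and let $\psi(0,0)\in\mathbb{C}^4$ be a unit vector specifying an initial state of the recycled coin walk. Let \[ P=\begin{pmatrix}1&0&0&0\\0&0&1&0\\0&0&0&1\\0&1&0&0\end{pmatrix}. \] Then for every position $n\in\{0,\dots,d-1\}$, \[ p_{\mathcal{M}}(n,t;P^*\psi(0,0)) = p(n,t,2;\psi(0,0)), \] where $P^*$ is the conjugate transpose of $P$. Consequently the time-averaged distributions also agree: $\bar{p}_{\mathcal{M}}(n;P^*\psi(0,0))=\bar{p}(n,2;\psi(0,0))$ for every $n$.
   Context: Recycled coin quantum walk on the $d$-cycle: Hilbert space $\mathcal{H}_P\otimes\mathcal{H}_{C_1}\otimes\mathcal{H}_{C_2}$, where $\mathcal{H}_P$ has orthonormal basis $\{\ket{n}:n=0,\dots,d-1\}$ and each coin space has orthonormal basis $\{\ket{\downarrow},\ket{\uparrow}\}$. For real $\theta$, $C(\theta)\ket{\downarrow}=\cos\theta\ket{\downarrow}+\sin\theta\ket{\uparrow}$, $C(\theta)\ket{\uparrow}=\sin\theta\ket{\downarrow}-\cos\theta\ket{\uparrow}$. For memory parameter $\phi$, the coin flip is $\widehat{C}=\ket{\downarrow}\bra{\downarrow}\otimes C(\pi/4)+\ket{\uparrow}\bra{\uparrow}\otimes C(\tfrac{\pi}{4}(1+\phi))$ on $\mathcal{H}_{C_1}\otimes\mathcal{H}_{C_2}$; the shift $S$ maps $\ket{n,c_1,\downarrow}\mapsto\ket{n-1 \bmod d,c_1,\downarrow}$, $\ket{n,c_1,\uparrow}\mapsto\ket{n+1\bmod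 d,c_1,\uparrow}$; the memory update $M$ swaps the coins, $\ket{c_1,c_2}\mapsto\ket{c_2,c_1}$; one step is $U=(I_P\otimes M)S(I_P\otimes\widehat{C})$. A vector $(a_1,a_2,a_3,a_4)^T$ denotes the coin state $a_1\ket{\downarrow\downarrow}+a_2\ket{\downarrow\uparrow}+a_3\ket{\uparrow\downarrow}+a_4\ket{\uparrow\uparrow}$ (coin 1 first), the initial state is $\ket{0}\otimes\psi(0,0)$, and $p(n,t,\phi;\psi(0,0))=\sum_{c_1,c_2}|\bra{n,c_1,c_2}U^t(\ket{0}\otimes\psi(0,0))|^2$. Quantum walk with memory on the $d$-cycle (Hadamard coin): Hilbert space $\mathcal{H}_P\otimes\mathcal{H}_M\otimes\mathcal{H}_C$, with $\mathcal{H}_M,\mathcal{H}_C$ each having basis $\{\ket{\downarrow},\ket{\uparrow}\}$; basis kets $\ket{n,m,c}$ (memory $m$, coin $c$). One step is $U_{\mathcal{M}}=S_{\mathcal{M}}(I_P\otimes I_M\otimes H)$, where $H=C(\pi/4)$ is the Hadamard operator on $\mathcal{H}_C$ and $S_{\mathcal{M}}$ maps (positions mod $d$) $\ket{n,\downarrow,\downarrow}\mapsto\ket{n-1,\downarrow,\downarrow}$, $\ket{n,\downarrow,\uparrow}\mapsto\ket{n+1,\uparrow,\uparrow}$, $\ket{n,\uparrow,\downarrow}\mapsto\ket{n+1,\uparrow,\downarrow}$, $\ket{n,\uparrow,\uparrow}\mapsto\ket{n-1,\downarrow,\uparrow}$. For this model a vector $(u_1,u_2,u_3,u_4)^T$ denotes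 the memory–coin state $u_1\ket{\downarrow,\downarrow}+u_2\ket{\uparrow,\downarrow}+u_3\ket{\downarrow,\uparrow}+u_4\ket{\uparrow,\uparrow}$ (written as $\ket{m,c}$), the initial state is $\ket{0}\otimes\psi_{\mathcal{M}}(0,0)$, and $p_{\mathcal{M}}(n,t;\psi_{\mathcal{M}}(0,0))=\sum_{m,c}|\bra{n,m,c}U_{\mathcal{M}}^t(\ket{0}\otimes\psi_{\mathcal{M}}(0,0))|^2$. Time-averaged distributions: $\bar{p}(n,\phi;\psi)=\lim_{T\to\infty}\frac1T\sum_{t=1}^T p(n,t,\phi;\psi)$ and $\bar{p}_{\mathcal{M}}(n;\psi)=\lim_{T\to\infty}\frac1T\sum_{t=1}^T p_{\mathcal{M}}(n,t;\psi)$. *)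

From HB Require Import structures.
From mathcomp Require Import all_boot all_order all_algebra.
From mathcomp Require Import all_classical all_reals all_analysis.
From mathcomp Require Import complex.
Set Implicit Arguments. Unset Strict Implicit. Unset Printing Implicit Defensive.
Import Order.TTheory GRing.Theory Num.Theory.
Import numFieldNormedType.Exports.
Local Open Scope ring_scope.

Section Walks.
Variable R : realType.
Local Notation C := (R[i]).

(* Coin labels: false = down, true = up. *)

(* Coin operator C(theta) as a matrix entry <c | C(theta) | c'>:
   C|down> = cos|down> + sin|up>,  C|up> = sin|down> - cos|up>. *)
Definition coinC (theta : R) (c c' : bool) : C :=
  match c', c with
  | false, false => real_complex R (cos theta)
  | false, true  => real_complex R (sin theta)
  | true,  false => real_complex R (sin theta)
  | true,  true  => real_complex R (- cos theta)
  end.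

(* state: amplitude of |n, c1, c2> *)
Definition rstate (d : nat) := 'I_d -> bool -> bool -> C.

(* coin flip  \hat C = |d><d| (x) C(pi/4) + |u><u| (x) C(pi/4 (1+phi)) *)
Definition rtheta (phi : R) (c1 : bool) : R :=
  if c1 then pi / 4 * (1 + phi) else pi / 4.

Definition rcoin d (phi : R) (psi : rstate d) : rstate d :=
  fun n c1 c2 => \sum_(c2' : bool) coinC (rtheta phi c1) c2 c2' * psi n c1 c2'.

(* shift: |n,c1,down> -> |n-1,c1,down>, |n,c1,up> -> |n+1,c1,up> (mod d) *)
Definition rshift d (psi : rstate d) : rstate d :=
  fun n c1 c2 => if c2 then psi (ord_pred n) c1 c2 else psi (ordS n) c1 c2.

Definition rswap d (psi : rstate d) : rstate d :=
  fun n c1 c2 => psi n c2 c1.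

(* one step U = (I (x) M) S (I (x) \hat C) *)
Definition rstep d (phi : R) (psi : rstate d) : rstate d :=
  rswap (rshift (rcoin phi psi)).

(* coin vector (a1,a2,a3,a4) = a1|dd> + a2|du> + a3|ud> + a4|uu> (coin 1 first) *)
Definition rcoin_index (c1 c2 : bool) : 'I_4 :=
  match c1, c2 with
  | false, false => inord 0
  | false, true  => inord 1
  | true,  false => inord 2
  | true,  true  => inord 3
  end.

Definition rinit d (psi0 : 'cV[C]_4) : rstate d :=
  fun n c1 c2 => if val n == 0%N then psi0 (rcoin_index c1 c2) 0 else 0.

Definition p_rec d (n : 'I_d) (t : nat) (phi : R) (psi0 : 'cV[C]_4) : R :=
  \sum_(c1 : bool) \sum_(c2 : bool)
     Normc.normc (iter t (@rstep d phi) (@rinit d psi0) n c1 c2) ^+ 2.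

(* state: amplitude of |n, m, c> *)
Definition mstate (d : nat) := 'I_d -> bool -> bool -> C.

Definition mcoin d (psi : mstate d) : mstate d :=
  fun n m c => \sum_(c' : bool) coinC (pi / 4) c c' * psi n m c'.

(* S_M: |n,d,d> -> |n-1,d,d>, |n,d,u> -> |n+1,u,u>,
        |n,u,d> -> |n+1,u,d>, |n,u,u> -> |n-1,d,u> *)
Definition mshift d (psi : mstate d) : mstate d :=
  fun n m c =>
    match m, c with
    | false, false => psi (ordS n) false false
    | true,  true  => psi (ord_pred n) false true
    | true,  false => psi (ord_pred n) true false
    | false, true  => psi (ordS n) true true
    end.

Definition mstep d (psi : mstate d) : mstate d := mshift (mcoin psi).

(* vector (u1,u2,u3,u4) = u1|d,d> + u2|u,d> + u3|d,u> + u4|u,u>  (|m,c>) *)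
Definition mindex (m c : bool) : 'I_4 :=
  match m, c with
  | false, false => inord 0
  | true,  false => inord 1
  | false, true  => inord 2
  | true,  true  => inord 3
  end.

Definition minit d (psi0 : 'cV[C]_4) : mstate d :=
  fun n m c => if val n == 0%N then psi0 (mindex m c) 0 else 0.

Definition p_mem d (n : 'I_d) (t : nat) (psi0 : 'cV[C]_4) : R :=
  \sum_(m : bool) \sum_(c : bool)
     Normc.normc (iter t (@mstep d) (@minit d psi0) n m c) ^+ 2.

Definition cesaro (p : nat -> R) (T : nat) : R :=
  (T%:R)^-1 * \sum_(1 <= t < T.+1) p t.

Definition pbar_rec d (n : 'I_d) (phi : R) (psi0 : 'cV[C]_4) : R :=
  limn (cesaro (fun t => p_rec n t phi psi0)).

Definition pbar_mem d (n : 'I_d) (psi0 : 'cV[C]_4) : R :=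
  limn (cesaro (fun t => p_mem n t psi0)).

Definition Pmat : 'M[C]_4 :=
  \matrix_(i < 4, j < 4)
    (if ((val i == 0) && (val j == 0)) || ((val i == 1) && (val j == 2))
        || ((val i == 2) && (val j == 3)) || ((val i == 3) && (val j == 1))
     then 1 else 0)%N%:R.

Definition conj_tr (A : 'M[C]_4) : 'M[C]_4 := (map_mx (@conjc R) A)^T.

Definition unit_vec (v : 'cV[C]_4) : Prop := \sum_(i < 4) Normc.normc (v i 0) ^+ 2 = 1.

End Walks.

(* The relabelling |n, c1, c2> |-> |n, m := c1, c := c1 xor c2> intertwines the two walks at
   phi = 2: the memory register is the first recycled coin, and the coin register records
   whether the two recycled coins differ. At phi = 2 the second coin operator is
   C(3 pi / 4), i.e. the Hadamard coin with both labels flipped, and under the relabelling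
   one step of the recycled walk becomes exactly one step of the walk with memory. The
   relabelling maps the initial state |0> (x) psi to |0> (x) P^* psi and preserves the
   probability at every position, so the distributions, hence their Cesaro limits, agree. *)
From HB Require Import structures.
From mathcomp Require Import all_boot all_order all_algebra.
From mathcomp Require Import all_classical all_reals all_analysis.
From mathcomp Require Import complex.
From mathcomp Require Import ring.
Import Order.TTheory GRing.Theory Num.Theory.
Set Implicit Arguments. Unset Strict Implicit.
Local Open Scope ring_scope.

Lemma iter_intertwine (S T : Type) (f : S -> S) (g : T -> T) (h : T -> S) :
  (forall x, f (h x) = h (g x)) -> forall n x, iter n f (h x) = h (iter n g x).
Proof. by move=> fh; elim=> [|n IHn] x //=; rewrite IHn fh. Qed.

Section RecycledAsMemory.
Variable R : realType.
Local Notation C := (R[i]).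

Lemma cos_pi4_sin : cos (pi / 4 : R) = sin (pi / 4).
Proof.
rewrite -cosBpihalf.
have -> : pi / 4 - pi / 2 = - (pi / 4 : R) by field.
by rewrite cosN.
Qed.

Lemma coinC_3pi4 (c c' : bool) :
  coinC (pi / 4 * (1 + 2) : R) c c' = coinC (pi / 4) (~~ c) (~~ c').
Proof.
have e3 : pi / 4 * (1 + 2) = pi / 4 + pi / 2 :> R by field.
by case: c; case: c'; rewrite /coinC e3 ?cosDpihalf ?sinDpihalf /= ?opprK cos_pi4_sin.
Qed.

Definition mem_of_rec d (r : rstate R d) : mstate R d :=
  fun n m c => r n m (m (+) c).

Lemma mstep_mem_of_rec d (r : rstate R d) :
  mstep (mem_of_rec r) = mem_of_rec (rstep 2 r).
Proof.
apply/funext => n; apply/funext => m; apply/funext => c.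
rewrite /mstep /mem_of_rec /rstep /rswap /rshift /mshift /mcoin /rcoin /rtheta.
by case: m; case: c; rewrite /= !big_bool ?coinC_3pi4 /= addrC.
Qed.

Lemma minit_Pmat d (psi0 : 'cV[C]_4) :
  @minit R d (conj_tr (@Pmat R) *m psi0) = mem_of_rec (@rinit R d psi0).
Proof.
apply/funext => n; apply/funext => m; apply/funext => c.
rewrite /minit /mem_of_rec /rinit; case: (val n == 0)%N => //.
rewrite !mxE !big_ord_recl big_ord0 !mxE !conjc_nat.
by case: m; case: c; rewrite /= ?inordK //= !mul0r !mul1r ?addr0 ?add0r;
  congr (psi0 _ _); apply/val_inj; rewrite /= inordK.
Qed.

Lemma p_mem_Pmat d (n : 'I_d) t (psi0 : 'cV[C]_4) :
  p_mem n t (conj_tr (@Pmat R) *m psi0) = p_rec n t 2 psi0.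
Proof.
rewrite /p_mem /p_rec minit_Pmat (iter_intertwine (@mstep_mem_of_rec d)).
by rewrite /mem_of_rec !big_bool /=; congr (_ + _); rewrite addrC.
Qed.

End RecycledAsMemory.

Theorem theorem2 (R : realType) (d : nat) (hd : (1 <= d)%N) (t : nat)
    (psi0 : 'cV[R[i]]_4) (hpsi : unit_vec psi0) :
  (forall n : 'I_d,
     p_mem n t (conj_tr (@Pmat R) *m psi0) = p_rec n t 2 psi0) /\
  (forall n : 'I_d,
     pbar_mem n (conj_tr (@Pmat R) *m psi0) = pbar_rec n 2 psi0).
Proof.
split=> n; first exact: p_mem_Pmat.
have p_eq : (fun s => p_mem n s (conj_tr (@Pmat R) *m psi0)) = (fun s => p_rec n s 2 psi0).
  by apply/funext => s; exact: p_mem_Pmat.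
by rewrite /pbar_mem /pbar_rec p_eq.
Qed.
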